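(* If $\mathcal D_n$ is the minimal (quotient) DFA of a left ideal, with initial state $0$ and transition semigroup $T_n$, then every transformation in $T_n$ is initially aperiodic, and no state of $\mathcal D_n$ accepts the empty language.
   Context: A left ideal is a nonempty $L\subseteq\Sigma^*$ with $L=\Sigma^*L$. The transition semigroup is the set of state transformations induced by nonempty words; $qt$ denotes the image of state $q$ under $t$. For a transformation $t$, the sequence $0,0t,0t^2,\dots$ eventually repeats: there are $i<j$ with $0,0t,\dots,0t^{j-1}$ distinct and $0t^j=0t^i$; $j-i$ is the period of $t$, and $t$ is initially aperiodic if its period is $1$. *)

From mathcomp Require Import all_boot.
Set Implicit Arguments. Unset Strict Implicit. Unset Printing Implicit Defensive.

Record dfa (Sigma Q : finType) := Dfa {
  delta : Q -> Sigma -> Q;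
  init : Q;
  final : pred Q }.

Section DFA.
Variables (Sigma Q : finType) (D : dfa Sigma Q).

Definition run (q : Q) (w : seq Sigma) : Q := foldl (delta D) q w.

Definition lang_of (q : Q) (w : seq Sigma) : Prop := final D (run q w).

Definition dfa_lang (w : seq Sigma) : Prop := lang_of (init D) w.

Definition minimal_dfa : Prop :=
  (forall q : Q, exists w, run (init D) w = q) /\
  (forall p q : Q, (forall w, lang_of p w <-> lang_of q w) -> p = q).

Definition word_trans (w : seq Sigma) : Q -> Q := fun q => run q w.

Definition in_trans_semigroup (t : Q -> Q) : Prop :=
  exists w : seq Sigma, w != [::] /\ forall q, t q = word_trans w q.
End DFA.

Definition left_ideal (Sigma : Type) (L : seq Sigma -> Prop) : Prop :=
  (exists w, L w) /\
  (forall w, L w <-> exists u v, w = u ++ v /\ L v).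

(* period of t from state q0 equals 1: with i < j such that
   q0, q0 t, ..., q0 t^(j-1) are distinct and q0 t^j = q0 t^i, j - i = 1 *)
Definition initially_aperiodic (Q : finType) (q0 : Q) (t : Q -> Q) : Prop :=
  exists i j : nat, i < j /\
    (forall k l, k < l -> l < j -> iter k t q0 <> iter l t q0) /\
    iter j t q0 = iter i t q0 /\ j - i = 1.

(** In a left ideal [L], if [v] is in [L] then so is [u ++ v]; hence the
    language of the state reached by [v] is contained in the language of the
    state reached by [u ++ v]. Along the orbit [0, 0t, 0t^2, ...] of a word
    transformation [t = w] the languages therefore increase. If the orbit first
    returns with [0t^j = 0t^i], the languages of [0t^i, ..., 0t^j] are all
    equal, so minimality forces [0t^(i+1) = 0t^i], i.e. [j = i + 1]. *)

From mathcomp Require Import all_boot.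

Section FiniteOrbit.
Variables (T : finType) (t : T -> T) (x : T).

Lemma iter_inj_lt_order k l :
  k < order t x -> l < order t x -> iter k t x = iter l t x -> k = l.
Proof. by move=> ltk ltl Ekl; rewrite -(findex_iter ltk) Ekl findex_iter. Qed.

Lemma iter_order_repeat :
  exists2 i, i < order t x & iter (order t x) t x = iter i t x.
Proof.
have conn : fconnect t x (iter (order t x) t x) by apply: fconnect_iter.
by exists (findex t x (iter (order t x) t x));
  [apply: findex_max | rewrite iter_findex].
Qed.

Lemma initially_aperiodic_of_repeat :
  (forall i j, i < j -> iter j t x = iter i t x -> iter i.+1 t x = iter i t x) ->
  initially_aperiodic x t.
Proof.
move=> stall; have [i lti Eret] := iter_order_repeat.
have iter_distinct k l : k < l -> l < order t x -> iter k t x <> iter l t x.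
  move=> ltkl ltl /(iter_inj_lt_order _ _ (ltn_trans ltkl ltl) ltl) Ekl.
  by rewrite Ekl ltnn in ltkl.
have Ei : iter i.+1 t x = iter i t x by apply: stall Eret.
have Eorder : order t x = i.+1.
  apply/eqP; rewrite eqn_leq lti andbT leqNgt; apply/negP => ltSi.
  exact: (iter_distinct i i.+1 (ltnSn i) ltSi (esym Ei)).
exists i, i.+1; rewrite subSnn -Eorder; split=> //; split=> //.
Qed.

End FiniteOrbit.

Lemma eq_initially_aperiodic (T : finType) (x : T) (t1 t2 : T -> T) :
  t1 =1 t2 -> initially_aperiodic x t1 -> initially_aperiodic x t2.
Proof.
move=> Et [i [j [ltij [distinct [Eret period]]]]].
have Eiter k : iter k t1 x = iter k t2 x by apply: eq_iter.
exists i, j; rewrite -!Eiter; split=> //; split=> // k l ltkl ltl.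
by rewrite -!Eiter; apply: distinct.
Qed.

Lemma left_ideal_catl (Sigma : Type) (L : seq Sigma -> Prop) u v :
  left_ideal L -> L v -> L (u ++ v).
Proof. by move=> [_ idealL] Lv; apply/idealL; exists u, v. Qed.

Section LeftIdealDFA.
Variables (Sigma Q : finType) (D : dfa Sigma Q).
Lemma run_cat q u v : run D q (u ++ v) = run D (run D q u) v.
Proof. exact: foldl_cat. Qed.

Lemma iter_word_trans w k q :
  iter k (word_trans D w) q = run D q (flatten (nseq k w)).
Proof.
by elim: k q => [|k IHk] q //; rewrite iterSr IHk /= run_cat.
Qed.

Hypothesis idealD : left_ideal (dfa_lang D).

Lemma lang_of_run_catl u v y :
  lang_of D (run D (init D) v) y -> lang_of D (run D (init D) (u ++ v)) y.
Proof.
rewrite /lang_of -!run_cat -catA; exact: left_ideal_catl idealD.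
Qed.

Lemma lang_of_iter_word_trans_mono w k m y : k <= m ->
  lang_of D (iter k (word_trans D w) (init D)) y ->
  lang_of D (iter m (word_trans D w) (init D)) y.
Proof.
move=> /subnK <-; rewrite !iter_word_trans nseqD flatten_cat.
exact: lang_of_run_catl.
Qed.

Hypothesis minD : minimal_dfa D.

Lemma word_trans_initially_aperiodic w :
  initially_aperiodic (init D) (word_trans D w).
Proof.
apply: initially_aperiodic_of_repeat => i j ltij Eret.
apply: minD.2 => y; split; last exact: lang_of_iter_word_trans_mono.
rewrite -Eret; exact: lang_of_iter_word_trans_mono.
Qed.

Lemma lang_of_nonempty q : exists y, lang_of D q y.
Proof.
have [[v Lv] _] := idealD; have [u <-] := minD.1 q.
by exists v; rewrite /lang_of -run_cat; apply: left_ideal_catl idealD _.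
Qed.

End LeftIdealDFA.

Theorem lemma2 (Sigma Q : finType) (D : dfa Sigma Q) :
  minimal_dfa D -> left_ideal (dfa_lang D) ->
  (forall t : Q -> Q, in_trans_semigroup D t -> initially_aperiodic (init D) t) /\
  (forall q : Q, exists w, lang_of D q w).
Proof.
move=> minD idealD; split; last exact: lang_of_nonempty.
move=> t [w [_ Et]].
apply: (@eq_initially_aperiodic _ _ (word_trans D w)) => [q | ]; first by rewrite Et.
exact: word_trans_initially_aperiodic.
Qed.
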